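(* Fix $0<p<1$ and $\lambda>0$, and for each $n$ let $\Delta=\Delta(n)=\frac{-\ln\left(1-\sqrt[n]{p}\right)}{\lambda}$. Then the expected response time of the protocol $\mathrm{PA\text{-}CORE}(\Delta)$ satisfies $\mathbb{E}[RT]\in O\!\left(\frac{\sqrt n\,\log n}{\lambda}\right)$ as $n\to\infty$; in particular it is sub-linear in $n$.
   Context: Setting: a supervisor $i_0$ and $n+1$ worker agents $i_1,\ldots,i_{n+1}$, connected by a complete reliable network; each message's delay is an independent exponential random variable with parameter $\lambda$. There is no global clock: each agent $i_k$ has a local clock $C_{i_k}(t)$ that measures elapsed time accurately but may be offset by an unknown constant; $C_{i_0}(t)=t$, and $i_0$ receives an external input at time $t=0$. Let $\delta=\frac{\ln n}{\lambda\sqrt n}$. Protocol $\mathrm{PA\text{-}CORE}(\Delta)$: at time $0$, $i_0$ sends ''trigger'' to all workers. Upon receiving ''trigger'', a worker sends ''redirect'' to each of the other $n$ workers. Each worker $i_k$ records its local clock readings $\tau_1,\ldots,\tau_n$ at the arrivals of the $n$ ''redirect'' messages it receives; upon the $n$-th one it computes $T=\frac1n\sum_{m=1}^n\tau_m-\frac{2}{\lambda}$, defines the adjusted clock $C^{Adj}_{i_k}(t)=C_{i_k}(t)-T$, waits until $C^{Adj}_{i_k}(t)\ge \Delta+2\delta(k-1)$ (not waiting if this already holds), and performs its action $\alpha_k$. With $t_k$ the (real) time at which $i_k$ performs $\alpha_k$, the response time is $RT=\max_k t_k$. *)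

From HB Require Import structures.
From mathcomp Require Import all_boot all_order all_algebra.
From mathcomp Require Import all_classical all_reals all_analysis.
Set Implicit Arguments. Unset Strict Implicit. Unset Printing Implicit Defensive.
Import Order.TTheory GRing.Theory Num.Theory.
Local Open Scope classical_set_scope.
Local Open Scope ring_scope.

Section PACore.
Variable R : realType.

Definition exp_pdf (lam x : R) : R := if 0 <= x then lam * expR (- (lam * x)) else 0.

(* Expectation of F(X_0,...,X_{m-1}) where X_0,...,X_{m-1} are i.i.d.
   Exp(lam), written as the iterated integral against the product density
   (F nonnegative; the value of F at indices >= m is irrelevant). *)
Fixpoint iid_exp_expect (lam : R) (m : nat) (F : (nat -> R) -> \bar R) : \bar R :=
  match m with
  | 0%N => F (fun _ => 0)
  | m'.+1 =>
      \int[@lebesgue_measure R]_(x in [set: R])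
        ((exp_pdf lam x)%:E *
           iid_exp_expect lam m' (fun w => F (fun i => if i == 0%N then x else w i.-1)))%E
  end.

Definition pa_delta (lam : R) (n : nat) : R := ln n%:R / (lam * Num.sqrt n%:R).

Definition pa_Delta (p lam : R) (n : nat) : R := - ln (1 - p `^ (n%:R^-1)) / lam.

(* One run of PA-CORE(Delta) with n+1 workers i_1..i_{n+1} (worker i_{k+1} is
   the ordinal k : 'I_n.+1).
   d k     = delay of the "trigger" message i_0 -> worker k,
   r j k   = delay of the "redirect" message worker j -> worker k (j <> k),
   c k     = unknown offset of the local clock of worker k: C_k(t) = t + c k.
   The supervisor's clock is real time; trigger sent at time 0. *)
Section Run.
Variables (lam Delta : R) (n : nat) (c : 'I_n.+1 -> R)
          (d : 'I_n.+1 -> R) (r : 'I_n.+1 -> 'I_n.+1 -> R).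

Definition arrival (j k : 'I_n.+1) : R := d j + r j k.

Definition local_clock (k : 'I_n.+1) (t : R) : R := t + c k.

Definition last_arrival (k : 'I_n.+1) : R :=
  \big[Num.max/0]_(j < n.+1 | j != k) arrival j k.

Definition T_adj (k : 'I_n.+1) : R :=
  n%:R^-1 * (\sum_(j < n.+1 | j != k) local_clock k (arrival j k)) - 2 / lam.

Definition adj_clock (k : 'I_n.+1) (t : R) : R := local_clock k t - T_adj k.

(* target reading Delta + 2 delta (k-1) for worker i_k, k = val k + 1 *)
Definition target (k : 'I_n.+1) : R := Delta + 2 * pa_delta lam n * (val k)%:R.

(* the action time: the earliest t >= last_arrival k with adj_clock k t >= target k
   (adj_clock k is t |-> t + const, so this is a max) *)
Definition action_time (k : 'I_n.+1) : R :=
  Num.max (last_arrival k) (target k - c k + T_adj k).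

Definition response_time : R := \big[Num.max/0]_(k < n.+1) action_time k.

End Run.

(* Expected response time: all (n+1) + (n+1)^2 delay variables are i.i.d.
   Exp(lam); variable 0..n are trigger delays, variable n+1 + j(n+1) + k is the
   redirect delay j -> k (diagonal ones j = k are unused dummies). *)
Definition expected_RT (lam Delta : R) (n : nat) (c : 'I_n.+1 -> R) : \bar R :=
  iid_exp_expect lam (n.+1 + n.+1 * n.+1)
    (fun w => (response_time lam Delta c (fun k => w (val k))
                 (fun j k => w (n.+1 + val j * n.+1 + val k)%N))%:E).

End PACore.

From HB Require Import structures.
From mathcomp Require Import all_boot all_order all_algebra.
From mathcomp Require Import all_classical all_reals all_analysis.
From mathcomp Require Import measurable_realfun ring lra zify.
Import Order.TTheory GRing.Theory Num.Theory.
Local Open Scope ring_scope.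
Set Implicit Arguments. Unset Strict Implicit. Unset Printing Implicit Defensive.

(* The unknown clock
   offsets cancel in the adjusted clock, and T is an average of arrival
   readings minus 2 / lam, so both times are at most |Delta| + 2 delta n plus
   the largest arrival time.  An arrival time is a sum of two of the
   m = (n+1) + (n+1)^2 exponential delays, so it suffices to bound the
   expected maximum delay; the soft-max inequality
   max_i X_i <= ln m / b + sum_i expR (b X_i) / (b m), with b = lam / 2,
   bounds it by (2 ln m + 4) / lam.  Finally |Delta| = O (ln n / lam),
   delta n = sqrt n ln n / lam and ln m = O (ln n). *)

Section IidExponential.
Context {R : realType}.
Local Notation mu := (@lebesgue_measure R).

(* Monotonicity of the integral of nonnegative functions needs no
   measurability: both sides are suprema over dominated simple functions. *)
Lemma ge0_le_integralT (f g : R -> \bar R) :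
  (forall x, (0 <= f x)%E) -> (forall x, (f x <= g x)%E) ->
  (\int[mu]_x f x <= \int[mu]_x g x)%E.
Proof.
move=> f0 fg.
have g0 x : (0 <= g x)%E by exact: le_trans (f0 x) (fg x).
rewrite !ge0_integralTE//; apply: ge_ereal_sup => _ [h hf <-].
by apply: ereal_sup_ubound; exists h => // x; exact: le_trans (hf x) (fg x).
Qed.

Lemma exp_pdfE (lam : R) : 0 <= lam -> exp_pdf lam = exponential_pdf lam.
Proof.
move=> lam0; apply/funext => x; rewrite /exp_pdf; case: ifPn => x0.
  by rewrite exponential_pdfE// mulNr.
by rewrite lt0_exponential_pdf// ltNge.
Qed.

Lemma exp_pdf_ge0 (lam x : R) : 0 <= lam -> 0 <= exp_pdf lam x.
Proof. by move=> lam0; rewrite exp_pdfE// exponential_pdf_ge0. Qed.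

Lemma measurable_exp_pdf (lam : R) : 0 <= lam -> measurable_fun setT (exp_pdf lam).
Proof. by move=> lam0; rewrite exp_pdfE//; exact: measurable_exponential_pdf. Qed.

Lemma integral_exp_pdfZ (lam a : R) : 0 < lam -> 0 <= a ->
  (\int[mu]_x ((exp_pdf lam x)%:E * a%:E) = a%:E)%E.
Proof.
move=> lam0 a0; rewrite ge0_integralZr//.
- by rewrite exp_pdfE ?ltW// integral_exponential_pdf// mul1e.
- by apply/measurable_EFinP; exact: measurable_exp_pdf (ltW lam0).
- by move=> x _; rewrite lee_fin exp_pdf_ge0// ltW.
Qed.

(* [exp_pdf lam * expR (b _)] is a multiple of the density of Exp(lam - b). *)
Lemma integral_exp_pdf_expR (lam a b : R) : 0 <= lam -> b < lam -> 0 <= a ->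
  (\int[mu]_x ((exp_pdf lam x)%:E * (a * expR (b * x))%:E)
   = (a * lam / (lam - b))%:E)%E.
Proof.
move=> lam0 blam a0; have lam_b0 : 0 < lam - b by rewrite subr_gt0.
transitivity (\int[mu]_x ((a * lam / (lam - b))%:E * (exponential_pdf (lam - b) x)%:E))%E.
  apply: eq_integral => x _; rewrite -!EFinM; congr (_%:E).
  rewrite /exp_pdf; have [x0|x0] := leP 0 x; last first.
    by rewrite lt0_exponential_pdf ?subr_ge0 ?ltW// mul0r mulr0.
  rewrite exponential_pdfE// mulNr.
  have -> : expR (- ((lam - b) * x)) = expR (- (lam * x)) * expR (b * x).
    by rewrite -expRD; congr expR; ring.
  by field; rewrite gt_eqF.
rewrite ge0_integralZl//.
- by rewrite integral_exponential_pdf// mule1.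
- by apply/measurable_EFinP; exact: measurable_exponential_pdf; exact: ltW.
- by move=> x _; rewrite lee_fin exponential_pdf_ge0// ltW.
- by rewrite lee_fin divr_ge0 ?mulr_ge0// ltW.
Qed.

Lemma iid_exp_expect_ge0 (lam : R) m (F : (nat -> R) -> \bar R) :
  0 <= lam -> (forall w, (0 <= F w)%E) -> (0 <= iid_exp_expect lam m F)%E.
Proof.
move=> lam0; elim: m F => [|m IHm] F F0 /=; first exact: F0.
apply: integral_ge0 => x _; apply: mule_ge0; first by rewrite lee_fin exp_pdf_ge0.
exact: IHm.
Qed.

(* If [F] is dominated by [A + \sum_i h (w i)], then integrating out one
   variable replaces its term [h (w 0)] by [E[h(X)] = K]. *)
Lemma iid_exp_expect_le_sum (lam K : R) (h : R -> R) :
  0 < lam -> measurable_fun setT h -> (forall x, 0 <= h x) ->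
  (\int[mu]_x ((exp_pdf lam x)%:E * (h x)%:E) = K%:E)%E ->
  forall m A (F : (nat -> R) -> \bar R), 0 <= A -> (forall w, (0 <= F w)%E) ->
  (forall w, (F w <= (A + \sum_(i < m) h (w i))%:E)%E) ->
  (iid_exp_expect lam m F <= (A + m%:R * K)%:E)%E.
Proof.
move=> lam0 mh h0 hK.
have pdf0 x : 0 <= exp_pdf lam x by exact: exp_pdf_ge0 (ltW lam0).
have mpdf : measurable_fun setT (exp_pdf lam) by exact: measurable_exp_pdf (ltW lam0).
have K0 : 0 <= K.
  rewrite -lee_fin -hK; apply: integral_ge0 => x _.
  by rewrite -EFinM lee_fin mulr_ge0.
elim=> [|m IHm] A F A0 F0 FA /=.
  by have := FA (fun _ => 0); rewrite big_ord0 mul0r.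
have AmK0 : 0 <= A + m%:R * K by rewrite addr_ge0// mulr_ge0.
apply: (@le_trans _ _ (\int[mu]_x ((exp_pdf lam x)%:E * (A + m%:R * K)%:E
                                   + (exp_pdf lam x)%:E * (h x)%:E))%E).
  apply: ge0_le_integralT => x.
    by apply: mule_ge0; [rewrite lee_fin|exact: iid_exp_expect_ge0 (ltW lam0) _].
  rewrite -EFinD -mulrDr EFinM lee_wpmul2l ?lee_fin//.
  have -> : A + m%:R * K + h x = A + h x + m%:R * K by ring.
  apply: IHm => [|w|w]; [exact: addr_ge0|exact: F0|].
  by apply: le_trans (FA _) _; rewrite big_ord_recl /= lee_fin addrA.
rewrite ge0_integralD//.
- by rewrite integral_exp_pdfZ// hK -EFinD lee_fin mulrSr mulrDl mul1r addrA.
- by move=> x _; rewrite -EFinM lee_fin mulr_ge0.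
- by apply/measurable_EFinP; apply: measurable_funM => //; exact: measurable_cst.
- by move=> x _; rewrite -EFinM lee_fin mulr_ge0.
- by apply/measurable_EFinP; exact: measurable_funM.
Qed.

End IidExponential.

Section ResponseTime.
Context {R : realType}.
Variables (lam Delta : R) (n : nat) (c d : 'I_n.+1 -> R) (r : 'I_n.+1 -> 'I_n.+1 -> R).
Variable B : R.
Hypotheses (lam_gt0 : 0 < lam) (n_gt0 : (0 < n)%N) (B_ge0 : 0 <= B).
Hypothesis arrival_le : forall j k, arrival d r j k <= B.

Lemma pa_delta_ge0 : 0 <= pa_delta lam n.
Proof.
rewrite /pa_delta divr_ge0 ?ln_ge0 ?ler1n// mulr_ge0 ?sqrtr_ge0//.
exact: ltW.
Qed.

Lemma last_arrival_le k : last_arrival d r k <= B.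
Proof. exact: bigmax_le. Qed.

Lemma T_adj_le k : T_adj lam c d r k <= B + c k.
Proof.
have lam_inv0 : 0 <= 2 / lam by rewrite divr_ge0// ltW.
suff : n%:R^-1 * (\sum_(j < n.+1 | j != k) local_clock c k (arrival d r j k)) <= B + c k.
  by rewrite /T_adj; lra.
rewrite ler_pdivrMl ?ltr0n//; apply: le_trans (_ : _ <= \sum_(j < n.+1 | j != k) (B + c k)) _.
  by apply: ler_sum => j _; rewrite /local_clock lerD2r.
by rewrite sumr_const cardC1 card_ord mulr_natl.
Qed.

Lemma target_le (k : 'I_n.+1) : target lam Delta k <= `|Delta| + 2 * pa_delta lam n * n%:R.
Proof.
rewrite /target lerD ?ler_norm// ler_wpM2l ?(mulr_ge0 _ pa_delta_ge0)//.
by rewrite ler_nat -ltnS ltn_ord.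
Qed.

Lemma response_time_le :
  response_time lam Delta c d r <= `|Delta| + 2 * pa_delta lam n * n%:R + B.
Proof.
have bound0 : 0 <= `|Delta| + 2 * pa_delta lam n * n%:R.
  by rewrite addr_ge0// mulr_ge0 ?(mulr_ge0 _ pa_delta_ge0).
apply: bigmax_le => [|k _]; first exact: addr_ge0.
rewrite /action_time ge_max; apply/andP; split.
  by rewrite (le_trans (last_arrival_le k))// lerDr.
have := target_le k; have := T_adj_le k; lra.
Qed.

End ResponseTime.

Section RealInequalities.
Context {R : realType}.

(* [expR y >= 1 + y] at [y = b * x i - ln m]: the usual soft-max bound. *)
Lemma le_ln_add_sum_expR (b : R) (m : nat) (x : nat -> R) (i : nat) :
  0 < b -> (i < m)%N ->
  x i <= ln m%:R / b + \sum_(j < m) expR (b * x j) / (b * m%:R).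
Proof.
move=> b0 im; have m0 : 0 < m%:R :> R by rewrite ltr0n (leq_ltn_trans _ im).
have soft_max : b * x i <= ln m%:R + expR (b * x i) / m%:R.
  have := expR_ge1Dx (b * x i - ln m%:R).
  by rewrite expRD expRN lnK ?posrE//; lra.
apply: le_trans (_ : _ <= ln m%:R / b + expR (b * x i) / (b * m%:R)) _.
  rewrite -ler_pdivlMl// in soft_max; apply: le_trans soft_max _.
  by rewrite mulrDr !(mulrC b^-1) invfM mulrA (mulrAC _ m%:R^-1).
rewrite lerD2l (bigD1 (Ordinal im))//= lerDl sumr_ge0// => j _.
by rewrite divr_ge0 ?expR_ge0// mulr_ge0 ?ltW.
Qed.

Lemma inv_1_sub_expRN_le (a : R) : 0 < a -> (1 - expR (- a))^-1 <= 1 + a^-1.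
Proof.
move=> a0; have E0 : 0 < expR (- a) by exact: expR_gt0.
have E1 : expR (- a) * (1 + a) <= 1.
  by rewrite expRN mulrC ler_pdivrMr ?expR_gt0// mul1r expR_ge1Dx.
have y0 : 0 < 1 - expR (- a) by nra.
rewrite -(ler_pM2r y0) mulVf ?gt_eqF// -(ler_pM2l a0) mulr1.
have -> : a * ((1 + a^-1) * (1 - expR (- a))) = (a + 1) * (1 - expR (- a)).
  by field; rewrite gt_eqF.
nra.
Qed.

End RealInequalities.

Section Delays.
Context {R : realType}.
Variables (p lam : R) (n : nat).
Hypotheses (p_gt0 : 0 < p) (p_lt1 : p < 1) (lam_gt0 : 0 < lam) (n_gt0 : (0 < n)%N).

(* With [q = - ln p], [p `^ (1/n) = expR (- q / n)], so [Delta] is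
   [ln (1 - expR (- q / n))^-1 / lam <= ln (1 + n / q) / lam]. *)
Lemma pa_Delta_le :
  `|pa_Delta p lam n| <= (ln n%:R + ln (1 + (- ln p)^-1)) / lam.
Proof.
have n1 : 1 <= n%:R :> R by rewrite ler1n.
have q0 : 0 < - ln p by rewrite oppr_gt0 ln_lt0// p_gt0.
set a := - ln p / n%:R; have a0 : 0 < a by rewrite divr_gt0// (lt_le_trans ltr01).
have -> : pa_Delta p lam n = - ln (1 - expR (- a)) / lam.
  rewrite /pa_Delta -[p `^ _]lnK ?posrE ?powR_gt0// ln_powR /a.
  by congr (- ln (1 - expR _) / _); rewrite mulNr opprK mulrC.
have y0 : 0 < 1 - expR (- a) by rewrite subr_gt0 expR_lt1 oppr_lt0.
have y1 : 1 - expR (- a) <= 1 by rewrite lerBlDr lerDl expR_ge0.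
rewrite ger0_norm; last by rewrite divr_ge0 ?oppr_ge0 ?ln_le0// ltW.
rewrite ler_pM2r ?invr_gt0// -lnV ?posrE// -lnM ?posrE ?ltr0n//; last first.
  by rewrite addr_gt0 ?invr_gt0.
rewrite ler_ln ?posrE ?invr_gt0// ?mulr_gt0 ?ltr0n ?addr_gt0 ?invr_gt0//.
apply: le_trans (inv_1_sub_expRN_le a0) _.
rewrite /a invf_div mulrDr mulr1; lra.
Qed.

End Delays.

Section ExpectedResponseTime.
Context {R : realType}.
Variables (lam Delta : R) (n : nat) (c : 'I_n.+1 -> R).
Hypotheses (lam_gt0 : 0 < lam) (n_gt0 : (0 < n)%N).

Let m := (n.+1 + n.+1 * n.+1)%N.

(* Every delay [w i] is below [ln m / b + \sum_j expR (b * w j) / (b * m)]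
   with [b = lam / 2], and each [expR (b * w j)] has expectation 2. *)
Lemma expected_RT_le : (expected_RT lam Delta c <=
  (`|Delta| + 2 * pa_delta lam n * n%:R + 4 * ln m%:R / lam + 8 / lam)%:E)%E.
Proof.
have m0 : 0 < m%:R :> R by rewrite ltr0n.
have b0 : 0 < lam / 2 by rewrite divr_gt0.
pose a := 4 / (lam * m%:R); have a0 : 0 <= a by rewrite divr_ge0// mulr_ge0 ?ltW.
pose h x := a * expR (lam / 2 * x).
have hK : (\int[@lebesgue_measure R]_x ((exp_pdf lam x)%:E * (h x)%:E)
           = (2 * a)%:E)%E.
  have half_lt : lam / 2 < lam by lra.
  rewrite integral_exp_pdf_expR// ?ltW//.
  by congr (_%:E); field; rewrite mulr_natr mulr2n addrK gt_eqF.
have delay_le w i : (i < m)%N ->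
    w i <= ln m%:R / (lam / 2) + \sum_(j < m) h (w j) / 2.
  move=> im; apply: le_trans (le_ln_add_sum_expR w b0 im) _.
  rewrite lerD2l le_eqVlt; apply/predU1l.
  by apply: eq_bigr => j _; rewrite /h /a; field; rewrite !gt_eqF.
have mh : measurable_fun setT h.
  apply: measurable_funM; first exact: measurable_cst.
  by apply: measurableT_comp; [exact: measurable_expR|exact: measurable_funM].
have h0 x : 0 <= h x by rewrite mulr_ge0// expR_ge0.
set A := `|Delta| + 2 * pa_delta lam n * n%:R + 2 * (ln m%:R / (lam / 2)).
have lnm0 : 0 <= ln m%:R / (lam / 2) by rewrite divr_ge0 ?ln_ge0 ?ler1n// ltW.
have A0 : 0 <= A.
  have := normr_ge0 Delta; have := pa_delta_ge0 lam_gt0 n_gt0.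
  have := ler0n R n; rewrite /A; nra.
have RT_le w : response_time lam Delta c (fun k => w (val k))
    (fun j k => w (n.+1 + val j * n.+1 + val k)%N) <= A + \sum_(i < m) h (w i).
  set B := 2 * (ln m%:R / (lam / 2) + \sum_(j < m) h (w j) / 2).
  have B0 : 0 <= B.
    by rewrite mulr_ge0 ?addr_ge0 ?sumr_ge0// => j _; rewrite divr_ge0.
  apply: le_trans (response_time_le Delta c lam_gt0 n_gt0 B0 _) _.
    move=> j k; have jn : (val j < n.+1)%N := ltn_ord j.
    have kn : (val k < n.+1)%N := ltn_ord k.
    apply: le_trans (lerD (delay_le w _ _) (delay_le w _ _)) _; rewrite /m; [nia|nia|].
    by rewrite /B mulr_natl mulr2n.
  have -> : B = 2 * (ln m%:R / (lam / 2)) + \sum_(j < m) h (w j).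
    by rewrite /B mulrDr mulr_sumr; congr (_ + _); apply: eq_bigr => j _; field.
  by rewrite /A; lra.
rewrite /expected_RT -/m.
apply: le_trans (iid_exp_expect_le_sum lam_gt0 mh h0 hK A0 _ _) _ => [w|w|].
- by rewrite lee_fin bigmax_ge_id.
- by rewrite lee_fin; exact: RT_le.
- rewrite lee_fin /A /a le_eqVlt; apply/predU1l.
  by field; rewrite !gt_eqF.
Qed.

End ExpectedResponseTime.

Section Asymptotics.
Context {R : realType}.

Lemma pa_delta_mulrn (lam : R) n : lam != 0 -> (0 < n)%N ->
  pa_delta lam n * n%:R = Num.sqrt n%:R * ln n%:R / lam.
Proof.
move=> lam0 n0; have sqrt_n0 : Num.sqrt n%:R != 0 :> R by rewrite sqrtr_eq0 -ltNge ltr0n.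
rewrite /pa_delta -[X in _ * X = _](@sqr_sqrtr _ n%:R) ?ler0n// expr2.
by field; rewrite sqrt_n0 lam0.
Qed.

Lemma ln_card_delays_le n : (0 < n)%N ->
  ln (n.+1 + n.+1 * n.+1)%N%:R <= ln (6 : R) + 2 * ln n%:R.
Proof.
move=> n0; have n_pos : 0 < n%:R :> R by rewrite ltr0n.
rewrite mulr2n mulrDl mul1r addrA -!lnM ?posrE ?mulr_gt0// ler_ln ?posrE ?mulr_gt0 ?ltr0n//.
by rewrite -!natrM ler_nat; nia.
Qed.

Lemma expected_RT_pa_Delta_le (p lam : R) n (c : 'I_n.+1 -> R) :
  0 < p -> p < 1 -> 0 < lam -> (0 < n)%N ->
  (expected_RT lam (pa_Delta p lam n) c <=
   ((ln (1 + (- ln p)^-1) + 4 * ln (6 : R) + 8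
     + 9 * ln n%:R + 2 * (Num.sqrt n%:R * ln n%:R)) / lam)%:E)%E.
Proof.
move=> p0 p1 lam0 n0.
apply: le_trans (expected_RT_le _ c lam0 n0) _; rewrite lee_fin.
rewrite -mulrA pa_delta_mulrn ?gt_eqF//.
have := pa_Delta_le p0 p1 lam0 n0; have := ln_card_delays_le n0.
have lam_inv0 : 0 < lam^-1 by rewrite invr_gt0.
rewrite !mulrDl; nra.
Qed.

Lemma le_mul_sqrt_ln (K : R) n : 0 <= K -> (2 <= n)%N ->
  K + 9 * ln n%:R + 2 * (Num.sqrt n%:R * ln n%:R)
  <= (K / ln 2 + 11) * (Num.sqrt n%:R * ln n%:R).
Proof.
move=> K0 n2; have ln2 : 0 < ln (2 : R) by rewrite ln_gt0// ltr1n.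
have ln_ge : ln 2 <= ln n%:R :> R by rewrite ler_ln ?posrE ?ltr0n ?ler_nat// (leq_trans _ n2).
have sqrt_ge1 : 1 <= Num.sqrt n%:R :> R.
  by rewrite -[leLHS]sqrtr1 ler_sqrt ?ler1n// (leq_trans _ n2).
have lnP : ln n%:R <= Num.sqrt n%:R * ln n%:R :> R.
  exact: ler_peMl (le_trans (ltW ln2) ln_ge) sqrt_ge1.
have KP : K <= K / ln 2 * (Num.sqrt n%:R * ln n%:R).
  have Kl0 : 0 <= K / ln 2 := divr_ge0 K0 (ltW ln2).
  by apply: le_trans (ler_wpM2l Kl0 (le_trans ln_ge lnP)); rewrite divfK ?gt_eqF.
by rewrite mulrDl; lra.
Qed.

End Asymptotics.

Theorem theorem7 (R : realType) (p lam : R) :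
  0 < p < 1 -> 0 < lam ->
  exists C : R, exists N : nat, forall n : nat, (N <= n)%N ->
    forall c : 'I_n.+1 -> R,
      (expected_RT lam (pa_Delta p lam n) c
         <= (C * (Num.sqrt n%:R * ln n%:R) / lam)%:E)%E.
Proof.
move=> /andP[p0 p1] lam0.
set K := ln (1 + (- ln p)^-1) + 4 * ln (6 : R) + 8.
have K0 : 0 <= K.
  have q0 : 0 <= (- ln p)^-1 by rewrite invr_ge0 oppr_ge0 ln_le0// ltW.
  by rewrite !addr_ge0 ?mulr_ge0 ?ln_ge0 ?lerDl ?ler1n.
exists (K / ln 2 + 11), 2%N => n n2 c.
apply: le_trans (expected_RT_pa_Delta_le c p0 p1 lam0 (ltnW n2)) _.
rewrite lee_fin ler_pM2r ?invr_gt0// -/K.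
exact: le_mul_sqrt_ln.
Qed.
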